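(* On a consistent L$^2$TS $(S,L,\to)$, the relations $\approx_L$ and $=_T^{\lambda}$ coincide: for all $s,t\in S$, $s\approx_L t$ iff $s=_T^{\lambda}t$.
   Context: Fix a set $\mathrm{Act}$ of actions containing a special action $\tau$ and a set $\mathbf{AP}$ of atomic propositions. An L$^2$TS is a triple $(S,L,\to)$ with $L:S\to\mathcal{P}(\mathbf{AP})$ and $\to\subseteq S\times\mathrm{Act}\times S$. It is consistent if (i) $s\xrightarrow{a}t$ implies ($L(s)=L(t)$ iff $a=\tau$); (ii) $s\xrightarrow{a}t$, $s'\xrightarrow{a}t'$ and $L(s)=L(s')$ imply $L(t)=L(t')$; (iii) $s\xrightarrow{a}t$, $s'\xrightarrow{b}t'$, $L(s)=L(s')$ and $L(t)=L(t')$ imply $a=b$. Its associated Kripke structure is $(S,L,\{(s,t)\mid\exists a.\ s\xrightarrow{a}t\})$ and its associated LTS is $(S,\to)$. In the associated Kripke structure, paths are sequences of states $s_0,s_1,\dots$ with consecutive states related, maximal if infinite or ending in a state without successor; $L(\pi)$ is obtained from $L(s_0),L(s_1),\dots$ by contracting maximal (finite or infinite) blocks of equal consecutive entries to one entry; $s\approx_L t$ iff $s$ and $t$ have the same sets $\{L(\pi)\mid\pi$ a maximal path from the state$\}$. In the associated LTS, paths are alternating sequences $s_0,a_1,s_1,\dots$ with $s_{k-1}\xrightarrow{a_k}s_k$, maximal if infinite or ending in a state without outgoing transitions. With the trivial colouring $\mathbf{T}$ assigning a single colour $C$ to every state, $\mathbf{T}(\pi)$ is obtained from $C,a_1,C,a_2,\dots$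 by contracting every finite maximal consecutive subsequence $C,\tau,C,\dots,\tau,C$ and every infinite one $C,\tau,C,\tau,\dots$ to $C$; these are complete $\mathbf{T}$-coloured traces of $s$ when $\pi$ is a maximal path from $s$. On the L$^2$TS, $s=_T^{\lambda}t$ means $L(s)=L(t)$ and $s,t$ have the same complete $\mathbf{T}$-coloured traces in the associated LTS. *)

Set Implicit Arguments.

(* Possibly-infinite sequences are encoded as  nat -> option X ;
   a maximal finite sequence of length n has entries Some _ at 0..n-1 and
   None from n on. *)

Section L2TS.
Variables (St Act AP : Type) (tau : Act).
Variable L : St -> (AP -> Prop).
Variable step : St -> Act -> St -> Prop.

Definition consistent : Prop :=
  (forall s a t, step s a t -> (L s = L t <-> a = tau)) /\
  (forall s a t s' t', step s a t -> step s' a t' -> L s = L s' -> L t = L t') /\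
  (forall s a t s' b t', step s a t -> step s' b t' -> L s = L s' -> L t = L t' -> a = b).

Definition kr (x y : St) : Prop := exists a, step x a y.

Definition kripke_maxpath (s : St) (p : nat -> option St) : Prop :=
  p 0 = Some s /\
  (forall k, p k = None -> p (S k) = None) /\
  (forall k x y, p k = Some x -> p (S k) = Some y -> kr x y) /\
  (forall k x, p k = Some x -> p (S k) = None -> forall y, ~ kr x y).

(* w is obtained from v by contracting every maximal (finite or infinite)
   block of equal consecutive entries to one entry; f k is the index in w of
   the block containing position k of v. *)
Definition stutter_contract {X : Type} (v w : nat -> option X) : Prop :=
  exists f : nat -> nat,
    f 0 = 0 /\
    (forall k, v (S k) = v k -> f (S k) = f k) /\
    (forall k, v (S k) <> v k -> f (S k) = S (f k)) /\
    (forall j x, w j = Some x <-> exists k, f k = j /\ v k = Some x).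

Definition label_trace (p : nat -> option St) (w : nat -> option (AP -> Prop)) : Prop :=
  stutter_contract (fun k => option_map L (p k)) w.

Definition label_traces (s : St) (w : nat -> option (AP -> Prop)) : Prop :=
  exists p, kripke_maxpath s p /\ label_trace p w.

Definition approx_L (s t : St) : Prop :=
  forall w, label_traces s w <-> label_traces t w.

(* A path s_0, a_1, s_1, a_2, ... is given by states p and actions acts, where
   acts k is the action a_{k+1} of the step p k --> p (S k). *)
Definition lts_maxpath (s : St) (p : nat -> option St) (acts : nat -> Act) : Prop :=
  p 0 = Some s /\
  (forall k, p k = None -> p (S k) = None) /\
  (forall k x y, p k = Some x -> p (S k) = Some y -> step x (acts k) y) /\
  (forall k x, p k = Some x -> p (S k) = None -> forall a y, ~ step x a y).

(* The trivial colouring T with a single colour C := tt.  Entries of coloured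
   sequences are inl C (a colour) or inr a (an action). *)
Definition Colour := unit.
Definition C : Colour := tt.

(* the sequence C, a_1, C, a_2, ... of a path *)
Definition coloured_seq (p : nat -> option St) (acts : nat -> Act)
  : nat -> option (Colour + Act) :=
  fun i =>
    if Nat.even i then
      match p (Nat.div2 i) with Some _ => Some (inl C) | None => None end
    else
      match p (S (Nat.div2 i)) with Some _ => Some (inr (acts (Nat.div2 i))) | None => None end.

(* w is obtained from u by contracting every maximal finite subsequence
   C,tau,C,...,tau,C and every infinite one C,tau,C,tau,... to C:
   f i is the index in w of the block containing position i of u; positions
   i and i+1 lie in the same block iff one of them is a tau. *)
Definition tau_contract (u w : nat -> option (Colour + Act)) : Prop :=
  exists f : nat -> nat,
    f 0 = 0 /\
    (forall i, (u (S i) = Some (inr tau) \/ u i = Some (inr tau)) -> f (S i) = f i) /\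
    (forall i, ~ (u (S i) = Some (inr tau) \/ u i = Some (inr tau)) -> f (S i) = S (f i)) /\
    (forall j x, w j = Some x <-> exists i, f i = j /\ u i = Some x /\ x <> inr tau).

Definition complete_T_traces (s : St) (w : nat -> option (Colour + Act)) : Prop :=
  exists p acts, lts_maxpath s p acts /\ tau_contract (coloured_seq p acts) w.

Definition eqT_lambda (s t : St) : Prop :=
  L s = L t /\ (forall w, complete_T_traces s w <-> complete_T_traces t w).

End L2TS.

From Stdlib Require Import Arith Lia Classical ClassicalEpsilon FunctionalExtensionality.

Set Implicit Arguments.

(* Consistency lets labels and actions determine each other along a path: a step is a
   tau-step iff it keeps the label (i), and a label-changing step has an action fixed by
   its two labels (iii).  Hence the complete T-coloured trace of a path is computed from
   its label trace L(pi) alone: every change of label l -> l' becomes C, a, C with a the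
   action attached to (l, l').  Conversely, by (ii), this coloured trace together with
   the first label L(s) gives back L(pi).  So the complete T-coloured traces of s are
   the images of its label traces under an encoding that is injective on traces with a
   common first label, and both relations of the theorem reduce to equality of label
   traces plus equality of L at the start. *)

Lemma coloured_seq_even {St Act} (p : nat -> option St) (acts : nat -> Act) k :
  coloured_seq p acts (2 * k) = match p k with Some _ => Some (inl C) | None => None end.
Proof. unfold coloured_seq. now rewrite Nat.even_even, Nat.div2_double. Qed.

Lemma coloured_seq_odd {St Act} (p : nat -> option St) (acts : nat -> Act) k :
  coloured_seq p acts (S (2 * k)) =
  match p (S k) with Some _ => Some (inr (acts k)) | None => None end.
Proof. unfold coloured_seq. now rewrite Nat.even_succ, Nat.odd_even, Nat.div2_succ_double. Qed.

Lemma option_seq_ext {X} (w1 w2 : nat -> option X) :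
  (forall j x, w1 j = Some x <-> w2 j = Some x) -> w1 = w2.
Proof.
  intros H. apply functional_extensionality. intros j.
  destruct (w1 j) as [x|] eqn:E1.
  - symmetry. now apply H.
  - destruct (w2 j) as [x|] eqn:E2; [|reflexivity].
    rewrite <- E1. now apply H.
Qed.

Definition prefix_closed {X} (v : nat -> option X) : Prop :=
  forall k, v k = None -> v (S k) = None.

Lemma prefix_closed_pred {X} {v : nat -> option X} {k y} :
  prefix_closed v -> v (S k) = Some y -> exists x, v k = Some x.
Proof.
  intros Hv Hy. destruct (v k) as [x|] eqn:Hx; [now exists x|].
  rewrite (Hv k Hx) in Hy. discriminate.
Qed.

(* [block_index P k] numbers the maximal runs of positions, a new run starting at [S k]
   exactly when [P k] fails; both contractions in the definitions are indexed this way. *)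
Fixpoint block_index (P : nat -> Prop) (k : nat) : nat :=
  match k with
  | 0 => 0
  | S k => if excluded_middle_informative (P k) then block_index P k
           else S (block_index P k)
  end.

Section BlockIndex.
Variable P : nat -> Prop.

Lemma block_index_same k : P k -> block_index P (S k) = block_index P k.
Proof. intros H; simpl; destruct (excluded_middle_informative _); tauto. Qed.

Lemma block_index_next k : ~ P k -> block_index P (S k) = S (block_index P k).
Proof. intros H; simpl; destruct (excluded_middle_informative _); tauto. Qed.

Lemma block_index_unique (f : nat -> nat) :
  f 0 = 0 -> (forall k, P k -> f (S k) = f k) -> (forall k, ~ P k -> f (S k) = S (f k)) ->
  forall k, f k = block_index P k.
Proof.
  intros H0 Hsame Hnext k. induction k as [|k IH]; [exact H0|].
  destruct (classic (P k)) as [Hk|Hk].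
  - now rewrite Hsame, block_index_same.
  - now rewrite Hnext, block_index_next, IH.
Qed.

Lemma block_index_mono k d : block_index P k <= block_index P (d + k).
Proof.
  induction d as [|d IH]; simpl; [lia|].
  destruct (excluded_middle_informative _); lia.
Qed.

Lemma block_index_const k d :
  block_index P (d + k) = block_index P k -> forall i, k <= i < d + k -> P i.
Proof.
  induction d as [|d IH]; intros H i Hi; [lia|].
  pose proof (block_index_mono k d) as Hmono. simpl in H.
  destruct (excluded_middle_informative (P (d + k))) as [Hd|Hd]; [|lia].
  destruct (Nat.eq_dec i (d + k)) as [->|Hne]; [exact Hd|].
  apply IH; [exact H|lia].
Qed.

Lemma block_index_reach k' m :
  block_index P k' = S m -> exists k, k < k' /\ block_index P k = m /\ ~ P k.
Proof.
  induction k' as [|k' IH]; intros Hk'; [discriminate|].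
  simpl in Hk'. destruct (excluded_middle_informative (P k')) as [Hp|Hp].
  - destruct (IH Hk') as [k [? ?]]. exists k. split; [lia|assumption].
  - exists k'. split; [lia|]. split; [congruence|assumption].
Qed.

End BlockIndex.

Definition stutter_index {X} (v : nat -> option X) : nat -> nat :=
  block_index (fun k => v (S k) = v k).

Lemma stutter_contractE {X} (v w : nat -> option X) :
  stutter_contract v w <->
  (forall j x, w j = Some x <-> exists k, stutter_index v k = j /\ v k = Some x).
Proof.
  split.
  - intros [f [H0 [Hsame [Hnext Hw]]]] j x.
    rewrite Hw. unfold stutter_index.
    now setoid_rewrite (block_index_unique _ f H0 Hsame Hnext).
  - intros Hw. exists (stutter_index v). split; [reflexivity|].
    split; [exact (@block_index_same _)|]. split; [exact (@block_index_next _)|exact Hw].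
Qed.

Lemma stutter_index_value {X} (v : nat -> option X) k1 k2 :
  stutter_index v k1 = stutter_index v k2 -> v k1 = v k2.
Proof.
  assert (Hrun : forall k d, stutter_index v (d + k) = stutter_index v k -> v (d + k) = v k).
  { intros k d Hd. pose proof (block_index_const _ d Hd) as Hsame. clear Hd.
    induction d as [|d IH]; [reflexivity|].
    simpl. rewrite (Hsame (d + k)) by lia. apply IH. intros i Hi. apply Hsame. lia. }
  intros H. destruct (le_ge_dec k1 k2).
  - replace k2 with ((k2 - k1) + k1) in * by lia. symmetry. now apply Hrun.
  - replace k1 with ((k1 - k2) + k2) in * by lia. now apply Hrun.
Qed.

Lemma stutter_contract_exists {X} (v : nat -> option X) : exists w, stutter_contract v w.
Proof.
  exists (fun j =>
    match excluded_middle_informative (exists k, stutter_index v k = j /\ v k <> None) with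
    | left H => v (proj1_sig (constructive_indefinite_description _ H))
    | right _ => None
    end).
  apply stutter_contractE. intros j x.
  destruct (excluded_middle_informative _) as [H|H].
  - destruct (constructive_indefinite_description _ H) as [k' [Hk' Hdef]]; simpl.
    split.
    + intros E. now exists k'.
    + intros [k [Hk E]]. rewrite <- E. apply stutter_index_value. congruence.
  - split; [discriminate|]. intros [k [Hk E]]. exfalso. apply H.
    exists k. split; [exact Hk|congruence].
Qed.

Lemma stutter_contract_succ {X} (v w : nat -> option X) m b :
  prefix_closed v -> stutter_contract v w -> w (S m) = Some b ->
  exists k a, stutter_index v k = m /\ v k = Some a /\ v (S k) = Some b /\ a <> b.
Proof.
  intros Hv Hw Hb. rewrite stutter_contractE in Hw.
  destruct (proj1 (Hw _ _) Hb) as [k' [Hk' Hvk']].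
  destruct (block_index_reach _ _ Hk') as [k [Hlt [Hk Hchange]]].
  assert (Hnext : v (S k) = Some b).
  { rewrite <- Hvk'. apply stutter_index_value.
    unfold stutter_index in *. now rewrite block_index_next, Hk, Hk'. }
  destruct (v k) as [a|] eqn:Ha.
  - exists k, a. split; [exact Hk|]. split; [exact Ha|]. split; [exact Hnext|].
    intros ->. congruence.
  - rewrite (Hv k Ha) in Hnext. discriminate.
Qed.

Definition tau_link {Act} (tau : Act) (u : nat -> option (Colour + Act)) (i : nat) : Prop :=
  u (S i) = Some (inr tau) \/ u i = Some (inr tau).

Definition tau_index {Act} (tau : Act) (u : nat -> option (Colour + Act)) : nat -> nat :=
  block_index (tau_link tau u).

Lemma tau_contractE {Act} (tau : Act) u w :
  tau_contract tau u w <->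
  (forall j x, w j = Some x <-> exists i, tau_index tau u i = j /\ u i = Some x /\ x <> inr tau).
Proof.
  split.
  - intros [f [H0 [Hsame [Hnext Hw]]]] j x.
    rewrite Hw. unfold tau_index.
    now setoid_rewrite (block_index_unique _ f H0 Hsame Hnext).
  - intros Hw. exists (tau_index tau u). split; [reflexivity|].
    split; [exact (@block_index_same _)|]. split; [exact (@block_index_next _)|exact Hw].
Qed.

Lemma tau_contract_functional {Act} (tau : Act) u w1 w2 :
  tau_contract tau u w1 -> tau_contract tau u w2 -> w1 = w2.
Proof.
  rewrite !tau_contractE. intros H1 H2. apply option_seq_ext.
  intros j x. now rewrite H1, H2.
Qed.

Section L2TSTraces.
Variables (St Act AP : Type) (tau : Act) (L : St -> (AP -> Prop)).
Variable step : St -> Act -> St -> Prop.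

Lemma lts_maxpath_kripke s p acts : lts_maxpath step s p acts -> kripke_maxpath step s p.
Proof.
  intros [H0 [Hclosed [Hstep Hend]]]. split; [exact H0|]. split; [exact Hclosed|]. split.
  - intros k x y Hx Hy. exists (acts k). exact (Hstep k x y Hx Hy).
  - intros k x Hx Hy y [a Ha]. exact (Hend k x Hx Hy a y Ha).
Qed.

Lemma kripke_maxpath_lts s p : kripke_maxpath step s p -> exists acts, lts_maxpath step s p acts.
Proof.
  intros [H0 [Hclosed [Hstep Hend]]].
  exists (fun k => epsilon (inhabits tau)
    (fun a => exists x y, p k = Some x /\ p (S k) = Some y /\ step x a y)).
  split; [exact H0|]. split; [exact Hclosed|]. split.
  - intros k x y Hx Hy.
    destruct (epsilon_spec (inhabits tau)
      (fun a => exists x y, p k = Some x /\ p (S k) = Some y /\ step x a y))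
      as [x' [y' [Hx' [Hy' Hs]]]].
    { destruct (Hstep k x y Hx Hy) as [a Ha]. now exists a, x, y. }
    congruence.
  - intros k x Hx Hy a y Ha. apply (Hend k x Hx Hy y). now exists a.
Qed.

Definition kripke_next (x : St) : option St :=
  match excluded_middle_informative (exists y, kr step x y) with
  | left H => Some (proj1_sig (constructive_indefinite_description _ H))
  | right _ => None
  end.

Fixpoint kripke_greedy_path (s : St) (k : nat) : option St :=
  match k with
  | 0 => Some s
  | S k => match kripke_greedy_path s k with Some x => kripke_next x | None => None end
  end.

Lemma kripke_maxpath_exists s : exists p, kripke_maxpath step s p.
Proof.
  exists (kripke_greedy_path s). split; [reflexivity|].
  split; [intros k H; simpl; now rewrite H|]. split.
  - intros k x y Hx Hy. simpl in Hy. rewrite Hx in Hy. unfold kripke_next in Hy.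
    destruct (excluded_middle_informative _) as [H|H]; [|discriminate].
    destruct (constructive_indefinite_description _ H) as [y' Hy']. simpl in Hy.
    now injection Hy as <-.
  - intros k x Hx Hy y Hxy. simpl in Hy. rewrite Hx in Hy. unfold kripke_next in Hy.
    destruct (excluded_middle_informative _) as [H|H]; [discriminate|]. apply H. now exists y.
Qed.

Definition labels (p : nat -> option St) : nat -> option (AP -> Prop) :=
  fun k => option_map L (p k).

Lemma label_trace_at p w k x :
  label_trace L p w -> p k = Some x -> w (stutter_index (labels p) k) = Some (L x).
Proof.
  intros Hw Hx. apply (proj1 (stutter_contractE _ _) Hw). exists k.
  unfold labels. now rewrite Hx.
Qed.

Lemma label_trace_head p s w : label_trace L p w -> p 0 = Some s -> w 0 = Some (L s).
Proof. intros Hw Hs. exact (label_trace_at 0 Hw Hs). Qed.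

Lemma label_trace_succ {p w m b} :
  prefix_closed p -> label_trace L p w -> w (S m) = Some b ->
  exists k x y, stutter_index (labels p) k = m /\ p k = Some x /\ p (S k) = Some y /\
    w m = Some (L x) /\ b = L y /\ L x <> L y.
Proof.
  intros Hp Hw Hb.
  assert (Hclosed : prefix_closed (labels p)).
  { intros k Hk. unfold labels in *. destruct (p k) eqn:E; [discriminate|]. now rewrite (Hp k E). }
  destruct (stutter_contract_succ m Hclosed Hw Hb) as [k [a [Hk [Ha [Hb' Hne]]]]].
  unfold labels in Ha, Hb'.
  destruct (p k) as [x|] eqn:Ex; [|discriminate].
  destruct (p (S k)) as [y|] eqn:Ey; [|discriminate].
  injection Ha as <-. injection Hb' as <-.
  exists k, x, y. repeat split; auto. rewrite <- Hk. exact (label_trace_at k Hw Ex).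
Qed.

Lemma label_traces_head s w :
  label_traces L step s w -> w 0 = Some (L s).
Proof. intros [p [[Hs _] Hw]]. exact (label_trace_head Hw Hs). Qed.

Lemma label_traces_exists s :
  exists w, label_traces L step s w.
Proof.
  destruct (kripke_maxpath_exists s) as [p Hp].
  destruct (stutter_contract_exists (labels p)) as [w Hw].
  now exists w, p.
Qed.

Hypothesis consistent_L2TS : consistent tau L step.

Lemma step_tau_iff x a y : step x a y -> (a = tau <-> L x = L y).
Proof. intros H. symmetry. exact (proj1 consistent_L2TS _ _ _ H). Qed.

Definition label_act (l1 l2 : AP -> Prop) : Act :=
  epsilon (inhabits tau) (fun a => exists x y, step x a y /\ L x = l1 /\ L y = l2).

Lemma label_act_spec x a y : step x a y -> label_act (L x) (L y) = a.
Proof.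
  intros H. unfold label_act.
  destruct (epsilon_spec (inhabits tau)
    (fun a => exists x' y', step x' a y' /\ L x' = L x /\ L y' = L y)) as [x' [y' [H' [Ex Ey]]]].
  { now exists a, x, y. }
  exact (proj2 (proj2 consistent_L2TS) _ _ _ _ _ _ H' H Ex Ey).
Qed.

Definition label_step_act (w : nat -> option (AP -> Prop)) (m : nat) : Act :=
  match w m, w (S m) with Some l1, Some l2 => label_act l1 l2 | _, _ => tau end.

(* The label trace read as a path through labels, each step carrying the action that
   consistency attaches to its pair of labels.  The filler [tau] in [label_step_act] is
   never read: [coloured_seq] only looks at the action of a step whose target exists. *)
Definition label_coloured_seq (w : nat -> option (AP -> Prop)) : nat -> option (Colour + Act) :=
  coloured_seq w (label_step_act w).

Lemma label_step_act_at {w m x a y} :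
  w m = Some (L x) -> w (S m) = Some (L y) -> step x a y -> label_step_act w m = a.
Proof. intros Hx Hy H. unfold label_step_act. rewrite Hx, Hy. exact (label_act_spec H). Qed.

Section LTSPath.
Variables (s : St) (p : nat -> option St) (acts : nat -> Act).
Hypothesis path : lts_maxpath step s p acts.

Let prefix_closed_path : prefix_closed p := proj1 (proj2 path).
Let step_path k x y : p k = Some x -> p (S k) = Some y -> step x (acts k) y :=
  proj1 (proj2 (proj2 path)) k x y.

Lemma tau_link_path k x y : p k = Some x -> p (S k) = Some y ->
  (tau_link tau (coloured_seq p acts) (2 * k) <-> L x = L y) /\
  (tau_link tau (coloured_seq p acts) (S (2 * k)) <-> L x = L y).
Proof.
  intros Hx Hy. rewrite <- (step_tau_iff (step_path Hx Hy)). unfold tau_link.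
  replace (S (S (2 * k))) with (2 * S k) by lia.
  rewrite !coloured_seq_even, coloured_seq_odd, Hx, Hy.
  split; (split; [intros [E|E]; congruence|intros ->; auto]).
Qed.

Lemma tau_index_path_even k x : p k = Some x ->
  tau_index tau (coloured_seq p acts) (2 * k) = 2 * stutter_index (labels p) k.
Proof.
  revert x. induction k as [|k IH]; intros y Hy; [reflexivity|].
  destruct (prefix_closed_pred prefix_closed_path Hy) as [x Hx].
  destruct (tau_link_path Hx Hy) as [Hlink Hlink'].
  replace (2 * S k) with (S (S (2 * k))) by lia.
  unfold tau_index, stutter_index.
  destruct (classic (L x = L y)) as [E|E].
  - assert (Hlab : labels p (S k) = labels p k).
    { unfold labels. rewrite Hx, Hy. simpl. now rewrite E. }
    rewrite (block_index_same _ _ (proj2 Hlink' E)), (block_index_same _ _ (proj2 Hlink E)).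
    rewrite (block_index_same (fun k => labels p (S k) = labels p k) k Hlab).
    exact (IH x Hx).
  - assert (Hlab : labels p (S k) <> labels p k).
    { unfold labels. rewrite Hx, Hy. simpl. intros E'. injection E' as E'. now apply E. }
    rewrite (block_index_next _ _ (fun H => E (proj1 Hlink' H))).
    rewrite (block_index_next _ _ (fun H => E (proj1 Hlink H))).
    rewrite (block_index_next (fun k => labels p (S k) = labels p k) k Hlab).
    fold (tau_index tau (coloured_seq p acts)) (stutter_index (labels p)).
    rewrite (IH x Hx). lia.
Qed.

Lemma tau_index_path_odd k x y : p k = Some x -> p (S k) = Some y -> L x <> L y ->
  tau_index tau (coloured_seq p acts) (S (2 * k)) = S (2 * stutter_index (labels p) k).
Proof.
  intros Hx Hy E. unfold tau_index. rewrite block_index_next.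
  - f_equal. exact (tau_index_path_even Hx).
  - now rewrite (proj1 (tau_link_path Hx Hy)).
Qed.

Variable w : nat -> option (AP -> Prop).
Hypothesis trace : label_trace L p w.

Lemma label_coloured_seq_path_entry j z :
  label_coloured_seq w j = Some z ->
  exists i, tau_index tau (coloured_seq p acts) i = j /\ coloured_seq p acts i = Some z /\
    z <> inr tau.
Proof.
  unfold label_coloured_seq. intros Hz.
  destruct (Nat.Even_or_Odd j) as [[m ->]|[m ->]].
  - rewrite coloured_seq_even in Hz. destruct (w m) as [l|] eqn:Hl; [|discriminate].
    injection Hz as <-.
    destruct (proj1 (proj1 (stutter_contractE _ _) trace m l) Hl) as [k [Hk Hlk]].
    change (stutter_index (labels p) k = m) in Hk. simpl in Hlk.
    destruct (p k) as [x|] eqn:Hx; [|discriminate].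
    exists (2 * k). rewrite (tau_index_path_even Hx), Hk, coloured_seq_even, Hx.
    split; [reflexivity|]. split; [reflexivity|discriminate].
  - replace (2 * m + 1) with (S (2 * m)) in * by lia.
    rewrite coloured_seq_odd in Hz. destruct (w (S m)) as [b|] eqn:Hb; [|discriminate].
    injection Hz as <-.
    destruct (label_trace_succ prefix_closed_path trace Hb)
      as [k [x [y [Hk [Hx [Hy [Hm [-> Hne]]]]]]]].
    rewrite (label_step_act_at Hm Hb (step_path Hx Hy)).
    exists (S (2 * k)). rewrite (tau_index_path_odd Hx Hy Hne), Hk, coloured_seq_odd, Hy.
    split; [reflexivity|]. split; [reflexivity|].
    intros E. injection E as E. exact (Hne (proj1 (step_tau_iff (step_path Hx Hy)) E)).
Qed.

Lemma path_entry_label_coloured_seq {i z} :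
  coloured_seq p acts i = Some z -> z <> inr tau ->
  label_coloured_seq w (tau_index tau (coloured_seq p acts) i) = Some z.
Proof.
  unfold label_coloured_seq. intros Hz Htau.
  destruct (Nat.Even_or_Odd i) as [[k ->]|[k ->]].
  - rewrite coloured_seq_even in Hz. destruct (p k) as [x|] eqn:Hx; [|discriminate].
    injection Hz as <-.
    now rewrite (tau_index_path_even Hx), coloured_seq_even, (label_trace_at k trace Hx).
  - replace (2 * k + 1) with (S (2 * k)) in * by lia.
    rewrite coloured_seq_odd in Hz. destruct (p (S k)) as [y|] eqn:Hy; [|discriminate].
    injection Hz as <-.
    destruct (prefix_closed_pred prefix_closed_path Hy) as [x Hx].
    assert (Hne : L x <> L y).
    { intros E. apply Htau. now rewrite (proj2 (step_tau_iff (step_path Hx Hy)) E). }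
    assert (Hnext : stutter_index (labels p) (S k) = S (stutter_index (labels p) k)).
    { apply block_index_next. unfold labels. rewrite Hx, Hy. simpl.
      intros E. injection E as E. now apply Hne. }
    pose proof (label_trace_at k trace Hx) as Hm.
    pose proof (label_trace_at (S k) trace Hy) as Hm'. rewrite Hnext in Hm'.
    rewrite (tau_index_path_odd Hx Hy Hne), coloured_seq_odd, Hm'.
    now rewrite (label_step_act_at Hm Hm' (step_path Hx Hy)).
Qed.

Lemma path_tau_contract : tau_contract tau (coloured_seq p acts) (label_coloured_seq w).
Proof.
  apply tau_contractE. intros j z. split.
  - apply label_coloured_seq_path_entry.
  - intros [i [<- [Hz Htau]]]. exact (path_entry_label_coloured_seq Hz Htau).
Qed.

End LTSPath.

Lemma label_coloured_seq_inj s1 s2 p1 p2 w1 w2 :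
  kripke_maxpath step s1 p1 -> kripke_maxpath step s2 p2 ->
  label_trace L p1 w1 -> label_trace L p2 w2 -> L s1 = L s2 ->
  label_coloured_seq w1 = label_coloured_seq w2 -> w1 = w2.
Proof.
  intros [H1 [Hp1 [Hs1 _]]] [H2 [Hp2 [Hs2 _]]] Hw1 Hw2 HL Heq.
  apply functional_extensionality. intros m. induction m as [|m IH].
  - now rewrite (label_trace_head Hw1 H1), (label_trace_head Hw2 H2), HL.
  - pose proof (f_equal (fun u => u (2 * S m)) Heq) as Hcolour.
    pose proof (f_equal (fun u => u (S (2 * m))) Heq) as Hact.
    unfold label_coloured_seq in Hcolour, Hact. cbv beta in Hcolour, Hact.
    rewrite !coloured_seq_even in Hcolour. rewrite !coloured_seq_odd in Hact.
    destruct (w1 (S m)) as [b1|] eqn:Hb1, (w2 (S m)) as [b2|] eqn:Hb2;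
      try discriminate; [|reflexivity].
    destruct (label_trace_succ Hp1 Hw1 Hb1) as [k1 [x1 [y1 [_ [Hx1 [Hy1 [Hm1 [-> _]]]]]]]].
    destruct (label_trace_succ Hp2 Hw2 Hb2) as [k2 [x2 [y2 [_ [Hx2 [Hy2 [Hm2 [-> _]]]]]]]].
    destruct (Hs1 k1 x1 y1 Hx1 Hy1) as [a1 Ha1].
    destruct (Hs2 k2 x2 y2 Hx2 Hy2) as [a2 Ha2].
    rewrite (label_step_act_at Hm1 Hb1 Ha1), (label_step_act_at Hm2 Hb2 Ha2) in Hact.
    injection Hact as <-. rewrite Hm1, Hm2 in IH. injection IH as Hx.
    (* consistency (ii): same source label and same action give the same target label *)
    f_equal. exact (proj1 (proj2 consistent_L2TS) _ _ _ _ _ Ha1 Ha2 Hx).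
Qed.

Lemma complete_T_tracesE s w' :
  complete_T_traces tau step s w' <->
  exists w, label_traces L step s w /\ w' = label_coloured_seq w.
Proof.
  split.
  - intros [p [acts [Hpath Hw']]].
    destruct (stutter_contract_exists (labels p)) as [w Hw].
    exists w. split; [exists p; split; [exact (lts_maxpath_kripke Hpath)|exact Hw]|].
    exact (tau_contract_functional Hw' (path_tau_contract Hpath Hw)).
  - intros [w [[p [Hp Hw]] ->]].
    destruct (kripke_maxpath_lts Hp) as [acts Hpath].
    exists p, acts. split; [exact Hpath|exact (path_tau_contract Hpath Hw)].
Qed.

Lemma label_traces_transfer s t w :
  L s = L t ->
  (forall w', complete_T_traces tau step s w' -> complete_T_traces tau step t w') ->
  label_traces L step s w -> label_traces L step t w.
Proof.
  intros HL HT Hw.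
  assert (Hs : complete_T_traces tau step s (label_coloured_seq w))
    by (apply complete_T_tracesE; now exists w).
  destruct (proj1 (complete_T_tracesE _ _) (HT _ Hs)) as [w2 [[q [Hq Hw2]] Heq]].
  destruct Hw as [p [Hp Hw]].
  replace w with w2; [now exists q|].
  exact (label_coloured_seq_inj Hq Hp Hw2 Hw (eq_sym HL) (eq_sym Heq)).
Qed.

End L2TSTraces.

Theorem theorem9p2 (S Act AP : Type) (tau : Act) (L : S -> (AP -> Prop))
  (step : S -> Act -> S -> Prop) :
  consistent tau L step ->
  forall s t : S, approx_L L step s t <-> eqT_lambda tau L step s t.
Proof.
  intros Hc s t. split.
  - intros Hst. split.
    + destruct (label_traces_exists L step s) as [w Hw].
      pose proof (label_traces_head Hw) as Hs.
      pose proof (label_traces_head (proj1 (Hst w) Hw)) as Ht.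
      congruence.
    + intros w'. rewrite !(complete_T_tracesE Hc).
      split; intros [w [Hw ->]]; exists w; split; try reflexivity; now apply Hst.
  - intros [HL HT] w. split; apply (label_traces_transfer Hc); auto; intros w'; apply HT.
Qed.
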